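(* Let $J$ be a $3\times 3$ Jacobi matrix that realizes perfect state transfer, and let $T_0>0$ be the earliest time at which perfect state transfer occurs. Then $J$ does not have Early State Exclusion; that is, there is no $t$ with $0<t<T_0$ such that $(e^{-iJt}\mathbf{e}_0,\mathbf{e}_0)_{\mathbb{C}^{3}}=0$.
   Context: A Jacobi matrix of order $N+1$ is a real symmetric tridiagonal $(N+1)\times(N+1)$ matrix $J$ with diagonal entries $a_0,\dots,a_N\in\mathbb{R}$ and off-diagonal entries $b_0,\dots,b_{N-1}>0$. Let $\mathbf{e}_0,\dots,\mathbf{e}_N$ be the standard basis of $\mathbb{C}^{N+1}$. $J$ realizes perfect state transfer (PST) at time $T>0$ if $e^{-iTJ}\mathbf{e}_0=e^{i\phi}\mathbf{e}_N$ for some $\phi\in\mathbb{R}$. If $T_0$ is the earliest (smallest positive) such time, $J$ is said to have Early State Exclusion (ESE) at time $t$ if $0<t<T_0$ and $(e^{-iJt}\mathbf{e}_0,\mathbf{e}_0)_{\mathbb{C}^{N+1}}=0$. *)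

From HB Require Import structures.
From mathcomp Require Import all_boot all_order all_algebra.
From mathcomp Require Export complex.
From mathcomp Require Import all_classical all_reals all_analysis.
Import Order.TTheory GRing.Theory Num.Theory.
Import numFieldNormedType.Exports.
Set Implicit Arguments. Unset Strict Implicit. Unset Printing Implicit Defensive.
Local Open Scope ring_scope.
Local Open Scope complex_scope.
Local Open Scope classical_set_scope.

(* Topology / norm on C = R[i] : the one induced by the complex modulus. *)
HB.instance Definition _ (R : rcfType) := PseudoPointedMetric.copy R[i] (R[i])^o.
HB.instance Definition _ (R : rcfType) := NormedModule.copy R[i] (R[i])^o.

Definition expmx (R : realType) (n : nat) (A : 'M[R[i]]_n) : 'M[R[i]]_n :=
  \matrix_(i, j) lim ((\sum_(k < m) (k`!%:R)^-1 * (A ^+ k) i j) @[m --> \oo]).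

Definition is_jacobi (R : realType) (N : nat) (J : 'M[R]_N.+1) : Prop :=
  (forall i j : 'I_N.+1, J i j = J j i) /\
  (forall i j : 'I_N.+1, (i.+1 < j)%N -> J i j = 0) /\
  (forall i j : 'I_N.+1, j = i.+1 :> nat -> 0 < J i j).

Definition cplx_mx (R : realType) (N : nat) (J : 'M[R]_N.+1) : 'M[R[i]]_N.+1 :=
  map_mx (fun x : R => x%:C) J.

Definition evol (R : realType) (N : nat) (J : 'M[R]_N.+1) (t : R) : 'M[R[i]]_N.+1 :=
  expmx ((- ('i * t%:C)) *: cplx_mx J).

Definition e0 (R : realType) (N : nat) : 'cV[R[i]]_N.+1 := delta_mx ord0 0.
Definition eN (R : realType) (N : nat) : 'cV[R[i]]_N.+1 := delta_mx ord_max 0.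

Definition cinner (R : realType) (N : nat) (u v : 'cV[R[i]]_N.+1) : R[i] :=
  \sum_(k < N.+1) u k 0 * (v k 0)^*.

Definition PST_at (R : realType) (N : nat) (J : 'M[R]_N.+1) (T : R) : Prop :=
  0 < T /\ exists phi : R,
    evol J T *m e0 R N = (cos phi +i* sin phi) *: eN R N.

Definition realizes_PST (R : realType) (N : nat) (J : 'M[R]_N.+1) : Prop :=
  exists T : R, PST_at J T.

Definition earliest_PST_time (R : realType) (N : nat) (J : 'M[R]_N.+1) (T0 : R) : Prop :=
  PST_at J T0 /\ (forall T : R, 0 < T < T0 -> ~ PST_at J T).

Definition ESE_at (R : realType) (N : nat) (J : 'M[R]_N.+1) (t : R) : Prop :=
  exists T0 : R, earliest_PST_time J T0 /\ 0 < t < T0 /\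
    cinner (evol J t *m e0 R N) (e0 R N) = 0.

(* Diagonalising the real symmetric matrix J by a unitary matrix shows that
   U(t) = e^{-itJ} is unitary, symmetric, commutes with J, and inherits every
   index symmetry of J.  For a 3x3 Jacobi matrix, PST at T means
   |U(T)_{20}| = 1; unitarity and symmetry then give
   U(T)_{00} = U(T)_{01} = U(T)_{21} = U(T)_{22} = 0 and |U(T)_{11}| = 1, and
   comparing the entries (0,1) and (0,2) of U(T) J = J U(T) yields a_2 = a_0 and
   b_1 = b_0: J is mirror symmetric, hence so is every U(t).  If U(t)_{00} = 0,
   then U(t)_{22} = 0 and U(t)_{21} = U(t)_{01}, so orthogonality of rows 0 and 2
   forces U(t)_{01} = 0 and |U(t)_{20}| = 1: there is already PST at t, which
   contradicts the minimality of the earliest PST time T_0 > t. *)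

From mathcomp Require Import all_boot all_order all_algebra.
From mathcomp Require Import all_classical all_reals all_analysis.
From mathcomp Require Import sesquilinear spectral ring lra.
Import Order.TTheory GRing.Theory Num.Theory.
Import numFieldNormedType.Exports.
Set Implicit Arguments.
Unset Strict Implicit.
Unset Printing Implicit Defensive.
Local Open Scope ring_scope.
Local Open Scope complex_scope.
Local Open Scope classical_set_scope.

Lemma cplx_mxE (R : realType) N (J : 'M[R]_N.+1) i j : cplx_mx J i j = (J i j)%:C.
Proof. exact: mxE. Qed.

Lemma mul_e0 (R : realType) N (M : 'M[R[i]]_N.+1) k : (M *m e0 R N) k 0 = M k ord0.
Proof. by rewrite /e0 -colE mxE. Qed.

Lemma cinner_e0 (R : realType) N (M : 'M[R[i]]_N.+1) :
  cinner (M *m e0 R N) (e0 R N) = M ord0 ord0.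
Proof.
rewrite /cinner (bigD1 ord0) //= big1 => [|k k_neq0]; rewrite mul_e0 !mxE /=.
  by rewrite mulr1n conjC1 mulr1 addr0.
by rewrite andbT (negPf k_neq0) mulr0n conjC0 mulr0.
Qed.

Lemma scale_eNE (R : realType) N (c : R[i]) k : (c *: eN R N) k 0 = c * (k == ord_max)%:R.
Proof. by rewrite !mxE andbT. Qed.

Section ImaginaryExponential.
Variable R : realType.

Lemma expr_negi (x : R) k :
  (- ('i * x%:C)) ^+ k =
  ((~~ odd k)%:R * (-1) ^+ k./2 * x ^+ k) -i* ((odd k)%:R * (-1) ^+ k./2 * x ^+ k).
Proof.
elim: k => [|k IHk]; first by rewrite /= !expr0 !mul1r; simpc.
rewrite exprS IHk /=.
by case: (boolP (odd k)) => [|/negPf] k_odd /=; simpc;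
  rewrite uphalf_half k_odd ?add1n ?add0n !exprS; congr (_ +i* _); ring.
Qed.

Lemma exp_coeff_negi (x : R) k :
  (k`!%:R)^-1 * (- ('i * x%:C)) ^+ k = cos_coeff x k -i* sin_coeff x k.
Proof.
have -> : (k`!%:R : R[i])^-1 = ((k`!%:R)^-1 : R)%:C.
  by rewrite fmorphV; congr (_^-1); rewrite rmorph_nat.
rewrite expr_negi /cos_coeff /sin_coeff /=; simpc.
rewrite exprnP; congr (_ -i* _); first by rewrite mulrC.
case: (boolP (odd k)) => [k_odd|]; last by rewrite !mul0r mulr0.
by rewrite mulrC; case: k k_odd => //= k; rewrite uphalf_half => /negPf ->.
Qed.

Lemma cvg_real_complex (a : nat -> R) (l : R) :
  a n @[n --> \oo] --> l -> (a n)%:C @[n --> \oo] --> l%:C.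
Proof.
move=> /cvgrPdist_lt a_l; apply/cvgrPdist_lt => -[e f].
rewrite ltcE /= => /andP[/eqP-> e0].
near=> n; rewrite -rmorphB normc_def /= expr0n addr0 sqrtr_sqr ltcR.
by near: n; exact: a_l.
Unshelve. all: by end_near.
Qed.

Lemma cvg_complex (a b : nat -> R) (l m : R) :
  a n @[n --> \oo] --> l -> b n @[n --> \oo] --> m ->
  (a n +i* b n) @[n --> \oo] --> (l +i* m).
Proof.
move=> /cvg_real_complex a_l /cvg_real_complex b_m.
have cplxE (u v : R) : u +i* v = u%:C + v%:C * 'i by simpc.
under eq_cvg do rewrite cplxE.
by rewrite cplxE; apply: cvgD; [exact: a_l | exact: cvgMr_tmp b_m].
Qed.

Lemma cvg_exp_negi (x : R) :
  (\sum_(k < m) (k`!%:R)^-1 * (- ('i * x%:C)) ^+ k) @[m --> \oo] --> (cos x -i* sin x).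
Proof.
have cos_x : series (cos_coeff x) m @[m --> \oo] --> cos x.
  by rewrite cos.unlock; exact: is_cvg_series_cos_coeff.
have sin_x : series (sin_coeff x) m @[m --> \oo] --> sin x.
  by rewrite sin.unlock; exact: is_cvg_series_sin_coeff.
have sumE m : \sum_(k < m) (k`!%:R)^-1 * (- ('i * x%:C)) ^+ k =
              series (cos_coeff x) m -i* series (sin_coeff x) m.
  elim: m => [|m IHm]; first by rewrite big_ord0 /series /= !big_geq // oppr0.
  by rewrite big_ord_recr IHm exp_coeff_negi /series /= !big_nat_recr //=; simpc.
under eq_cvg do rewrite sumE.
by apply: cvg_complex; [exact: cos_x | exact: cvgN sin_x].
Qed.
End ImaginaryExponential.

Lemma normc_conj_cis (R : realType) (a : R) : `|cos a -i* sin a| = 1.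
Proof. by rewrite normc_def /= sqrrN cos2Dsin2 sqrtr1. Qed.

Lemma normc_cis (R : realType) (a : R) : `|cos a +i* sin a| = 1.
Proof. by rewrite normc_def /= cos2Dsin2 sqrtr1. Qed.

Lemma norm1_cis (R : realType) (z : R[i]) : `|z| = 1 -> exists phi : R, z = cos phi +i* sin phi.
Proof.
move=> z1; have /complexI : ((complex.Re z) ^+ 2 + (complex.Im z) ^+ 2)%:C = 1%:C.
  by rewrite add_Re2_Im2 z1 expr1n.
case: z {z1} => a b /= ab1.
have a_itv : a \in `[(-1), 1]%R by rewrite in_itv /=; apply/andP; split; nra.
have sin_acos : sin (acos a) = `|b|.
  rewrite sin_acos; last by move: a_itv; rewrite in_itv.
  by rewrite (_ : 1 - a ^+ 2 = b ^+ 2) ?sqrtr_sqr //; lra.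
have [b_ge0|b_lt0] := lerP 0 b.
  by exists (acos a); rewrite acosK // sin_acos ger0_norm.
by exists (- acos a); rewrite cosN sinN acosK // sin_acos ltr0_norm // opprK.
Qed.

Lemma diag_unitarymx (C : numClosedFieldType) n (d : 'rV[C]_n) :
  (forall l, `|d 0 l| = 1) -> diag_mx d \is unitarymx.
Proof.
move=> d1; apply/unitarymxP; rewrite tr_diag_mx map_diag_mx mulmx_diag -diag_const_mx.
by congr diag_mx; apply/rowP => l; rewrite !mxE -normCK d1 expr1n.
Qed.

Section UnitaryEntries.
Variables (C : numClosedFieldType) (n : nat) (U : 'M[C]_n).
Hypothesis U_unitary : U \is unitarymx.

Lemma unitarymx_dot a b : \sum_k U a k * (U b k)^*%R = (a == b)%:R.
Proof.
move/unitarymxP/matrixP/(_ a b): U_unitary; rewrite !mxE => <-.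
by apply: eq_bigr => k _; rewrite !mxE.
Qed.

Lemma unitarymx_row_norm a : \sum_k `|U a k| ^+ 2 = 1.
Proof.
by have := unitarymx_dot a a; rewrite eqxx mulr1n => <-; apply: eq_bigr => k _; rewrite normCK.
Qed.

Lemma unitarymx_norm1_row a b : `|U a b| = 1 -> forall k, k != b -> U a k = 0.
Proof.
move=> Uab1 k kb; apply/eqP; rewrite -normr_eq0 -sqrf_eq0; apply/eqP.
have := unitarymx_row_norm a; rewrite (bigD1 b) //= Uab1 expr1n -[RHS]addr0 => /addrI.
by move/psumr_eq0P; apply => // l _; rewrite exprn_ge0.
Qed.

End UnitaryEntries.

Section Diagonalization.
Variables (R : realType) (n : nat) (P : 'M[R[i]]_n).
Hypothesis P_unit : P \in unitmx.

Lemma mul_conj_diag (D1 D2 : 'rV[R[i]]_n) :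
  (invmx P *m diag_mx D1 *m P) *m (invmx P *m diag_mx D2 *m P) =
  invmx P *m diag_mx (\row_l (D1 0 l * D2 0 l)) *m P.
Proof. by rewrite !mulmxA (mulmxK P_unit) -[_ *m diag_mx D2]mulmxA mulmx_diag. Qed.

Lemma expr_conj_diag (D : 'rV[R[i]]_n) k :
  (invmx P *m diag_mx D *m P) ^+ k = invmx P *m diag_mx (\row_l D 0 l ^+ k) *m P.
Proof.
elim: k => [|k IHk].
  have -> : \row_l D 0 l ^+ 0 = const_mx 1 by apply/rowP => l; rewrite !mxE.
  by rewrite diag_const_mx mulmx1 (mulVmx P_unit).
rewrite exprS -mulmxE IHk mul_conj_diag.
by apply: (congr1 (fun d => invmx P *m diag_mx d *m P)); apply/rowP => l; rewrite !mxE exprS.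
Qed.

Lemma expmx_conj_diag (D E : 'rV[R[i]]_n) :
  (forall l, (\sum_(k < m) (k`!%:R)^-1 * D 0 l ^+ k) @[m --> \oo] --> E 0 l) ->
  expmx (invmx P *m diag_mx D *m P) = invmx P *m diag_mx E *m P.
Proof.
move=> cvgE; apply/matrixP => i j.
have -> : (invmx P *m diag_mx E *m P) i j = \sum_l (invmx P i l * P l j) * E 0 l.
  by rewrite mxE; apply: eq_bigr => l _; rewrite mul_mx_diag !mxE mulrAC.
rewrite mxE; apply: cvg_lim => //.
have -> : (fun m => \sum_(k < m) (k`!%:R)^-1 * ((invmx P *m diag_mx D *m P) ^+ k) i j) =
    (fun m => \sum_l (invmx P i l * P l j) * \sum_(k < m) (k`!%:R)^-1 * D 0 l ^+ k).
  apply/funext => m; under eq_bigr do rewrite expr_conj_diag mxE mulr_sumr.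
  rewrite exchange_big; apply: eq_bigr => l _; rewrite mulr_sumr.
  by apply: eq_bigr => k _; rewrite mul_mx_diag !mxE; ring.
by apply: (cvg_big add_continuous) => // l _; exact: cvgMl_tmp (cvgE l).
Qed.

End Diagonalization.

Section PowerEntries.
Variables (C : comNzRingType) (n : nat) (A : 'M[C]_n).

Lemma exprmx_sym : (forall i j, A i j = A j i) -> forall m i j, (A ^+ m) i j = (A ^+ m) j i.
Proof.
move=> A_sym; elim=> [|m IHm] i j; first by rewrite expr0 !mxE eq_sym.
rewrite [in LHS]exprS [in RHS]exprSr -!mulmxE !mxE; apply: eq_bigr => l _.
by rewrite IHm A_sym mulrC.
Qed.

Lemma exprmx_reindex (s : 'I_n -> 'I_n) : injective s ->
  (forall i j, A (s i) (s j) = A i j) -> forall m i j, (A ^+ m) (s i) (s j) = (A ^+ m) i j.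
Proof.
move=> s_inj As; elim=> [|m IHm] i j; first by rewrite expr0 !mxE (inj_eq s_inj).
by rewrite exprS -!mulmxE !mxE (reindex_inj s_inj); apply: eq_bigr => l _; rewrite IHm As.
Qed.

End PowerEntries.

Lemma expmx_entry_eq (R : realType) n (A B : 'M[R[i]]_n) i j k l :
  (forall m, (A ^+ m) i j = (B ^+ m) k l) -> expmx A i j = expmx B k l.
Proof.
(* Rewriting both limits in one step makes the unifier compare them by
   conversion, which does not terminate. *)
move=> AB; rewrite [LHS]mxE [RHS]mxE.
by under eq_fun do under eq_bigr do rewrite AB.
Qed.

Section EvolutionSymmetries.
Variables (R : realType) (N : nat) (J : 'M[R]_N.+1).

Lemma evol_sym : (forall i j, J i j = J j i) -> forall t i j, evol J t i j = evol J t j i.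
Proof.
move=> J_sym t i j; apply: expmx_entry_eq => m; apply: exprmx_sym => a b.
by rewrite !mxE J_sym.
Qed.

Lemma evol_reindex (s : 'I_N.+1 -> 'I_N.+1) : injective s ->
  (forall i j, J (s i) (s j) = J i j) -> forall t i j, evol J t (s i) (s j) = evol J t i j.
Proof.
move=> s_inj Js t i j; apply: expmx_entry_eq => m; apply: exprmx_reindex => // a b.
by rewrite !mxE Js.
Qed.

End EvolutionSymmetries.

Section SpectralEvolution.
Variables (R : realType) (N : nat) (J : 'M[R]_N.+1).
Variables (P : 'M[R[i]]_N.+1) (lambda : 'I_N.+1 -> R).
Hypothesis P_unitary : P \is unitarymx.
Hypothesis J_spectral : cplx_mx J = invmx P *m diag_mx (\row_l (lambda l)%:C) *m P.

Let P_unit : P \in unitmx := unitarymx_unit P_unitary.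

Lemma evol_spectral t :
  evol J t = invmx P *m diag_mx (\row_l (cos (t * lambda l) -i* sin (t * lambda l))) *m P.
Proof.
rewrite /evol J_spectral scalemxAl scalemxAr -linearZ /=.
apply: (expmx_conj_diag P_unit) => l; rewrite !mxE mulNr -mulrA -rmorphM.
exact: cvg_exp_negi.
Qed.

Lemma spectral_evol_unitary t : evol J t \is unitarymx.
Proof.
rewrite evol_spectral (invmx_unitary P_unitary).
apply: mul_unitarymx P_unitary; apply: mul_unitarymx; first by rewrite trmxC_unitary.
by apply: diag_unitarymx => l; rewrite mxE normc_conj_cis.
Qed.

Lemma spectral_evol_cplx_mxC t : evol J t *m cplx_mx J = cplx_mx J *m evol J t.
Proof.
rewrite evol_spectral J_spectral.
rewrite [LHS](mul_conj_diag P_unit) [RHS](mul_conj_diag P_unit).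
by apply: (congr1 (fun d => invmx P *m diag_mx d *m P)); apply/rowP => l; rewrite !mxE mulrC.
Qed.

End SpectralEvolution.

Section SymmetricEvolution.
Variables (R : realType) (N : nat) (J : 'M[R]_N.+1).
Hypothesis J_sym : forall i j, J i j = J j i.

Lemma cplx_mx_spectral : exists2 P : 'M[R[i]]_N.+1, P \is unitarymx &
  exists lambda : 'I_N.+1 -> R, cplx_mx J = invmx P *m diag_mx (\row_l (lambda l)%:C) *m P.
Proof.
have J_herm : cplx_mx J \is hermsymmx.
  apply: realsym_hermsym; last by apply/mxOverP => i j; rewrite mxE complex_real.
  by apply/is_hermitianmxP; rewrite expr0 scale1r; apply/matrixP => i j; rewrite !mxE J_sym.
exists (spectralmx (cplx_mx J)); first exact: spectral_unitarymx.
exists (fun l => complex.Re (spectral_diag (cplx_mx J) 0 l)).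
have /hermitian_normalmx/orthomx_spectralP {1}-> := J_herm.
apply: (congr1 (fun d => invmx _ *m diag_mx d *m _)); apply/rowP => l; rewrite mxE.
by have /mxOverP/(_ 0 l)/RRe_real := hermitian_spectral_diag_real J_herm.
Qed.

Lemma evol_unitary t : evol J t \is unitarymx.
Proof.
have [P P_unitary [lambda J_spectral]] := cplx_mx_spectral.
exact: spectral_evol_unitary P_unitary J_spectral t.
Qed.

Lemma evol_cplx_mxC t : evol J t *m cplx_mx J = cplx_mx J *m evol J t.
Proof.
have [P P_unitary [lambda J_spectral]] := cplx_mx_spectral.
exact: spectral_evol_cplx_mxC P_unitary J_spectral t.
Qed.

Lemma evol_cplx_mxC_entry t a b :
  \sum_k evol J t a k * (J k b)%:C = \sum_k (J a k)%:C * evol J t k b.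
Proof.
move/matrixP/(_ a b): (evol_cplx_mxC t); rewrite !mxE.
by under eq_bigr do rewrite cplx_mxE; under [RHS]eq_bigr do rewrite cplx_mxE.
Qed.

Lemma PST_atE T : PST_at J T <-> 0 < T /\ `|evol J T ord_max ord0| = 1.
Proof.
split=> [[T_gt0 [phi U_e0]]|[T_gt0 U_N0]].
  split=> //; move/matrixP/(_ ord_max 0): U_e0; rewrite mul_e0 => ->.
  by rewrite scale_eNE eqxx mulr1 normc_cis.
split=> //; have [phi U_N0E] := norm1_cis U_N0; exists phi.
apply/matrixP => k j; rewrite ord1 mul_e0 scale_eNE -U_N0E.
have [->|k_N] := eqVneq k ord_max; first by rewrite mulr1n mulr1.
rewrite mulr0n mulr0 evol_sym //.
by apply: (unitarymx_norm1_row (evol_unitary T) _ k_N); rewrite evol_sym.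
Qed.

End SymmetricEvolution.

Local Notation i0 := (@ord0 2).
Local Notation i1 := (@Ordinal 3 1 isT).
Local Notation i2 := (@ord_max 2).

Lemma ord3P (a : 'I_3) : [\/ a = i0, a = i1 | a = i2].
Proof.
by case: a => [[|[|[|n]]] a_lt]; [constructor 1 | constructor 2 | constructor 3 | by []];
  apply: val_inj.
Qed.

Lemma rev_ord3_0 : rev_ord i0 = i2. Proof. exact: val_inj. Qed.
Lemma rev_ord3_1 : rev_ord i1 = i1. Proof. exact: val_inj. Qed.
Lemma rev_ord3_2 : rev_ord i2 = i0. Proof. exact: val_inj. Qed.

Lemma sum3 (V : zmodType) (F : 'I_3 -> V) : \sum_(k < 3) F k = F i0 + F i1 + F i2.
Proof. by rewrite !big_ord_recr big_ord0 /= add0r; congr (F _ + F _ + F _); apply: val_inj. Qed.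

Section Jacobi3.
Variables (R : realType) (J : 'M[R]_3).
Hypothesis J_jacobi : is_jacobi J.

Let J_sym : forall i j, J i j = J j i := J_jacobi.1.

Lemma jacobi3_corner : J i0 i2 = 0.
Proof. by case: J_jacobi => _ [+ _]; apply. Qed.

Lemma jacobi3_offdiag_gt0 : 0 < J i0 i1 /\ 0 < J i1 i2.
Proof. by case: J_jacobi => _ [_ pos]; split; apply: pos. Qed.

Lemma PST_mirror_symmetric T : PST_at J T -> J i2 i2 = J i0 i0 /\ J i2 i1 = J i0 i1.
Proof.
move=> /(PST_atE J_sym) [_ U20]; set U := evol J T in U20 *.
have U_unitary : U \is unitarymx := evol_unitary J_sym T.
have U_sym : forall i j, U i j = U j i := evol_sym J_sym T.
have U02 : `|U i0 i2| = 1 by rewrite U_sym.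
have [U00 U01] : U i0 i0 = 0 /\ U i0 i1 = 0.
  by split; apply: (unitarymx_norm1_row U_unitary U02).
have [U21 U22] : U i2 i1 = 0 /\ U i2 i2 = 0.
  by split; apply: (unitarymx_norm1_row U_unitary U20).
have U11 : `|U i1 i1| = 1.
  have := unitarymx_row_norm U_unitary i1.
  rewrite sum3 (U_sym i1 i0) (U_sym i1 i2) U01 U21 normr0 expr0n add0r addr0.
  by move/eqP; rewrite sqrp_eq1 // => /eqP.
have U02_neq0 : U i0 i2 != 0 by rewrite -normr_eq0 U02 oner_neq0.
have := evol_cplx_mxC_entry J_sym T i0 i1; have := evol_cplx_mxC_entry J_sym T i0 i2.
rewrite -/U !sum3 U00 U01 U22 (U_sym i1 i2) U21 jacobi3_corner.
rewrite !mul0r !mulr0 !add0r !addr0 => comm02 comm01; split.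
  by apply: complexI; apply: (mulfI U02_neq0); rewrite comm02 mulrC.
have [J01_gt0 J12_gt0] := jacobi3_offdiag_gt0.
move/(congr1 Num.norm): comm01; rewrite !normrM U02 U11 mul1r mulr1 J_sym.
by rewrite !ger0_norm ?ler0c ?ltW // => /complexI.
Qed.

Lemma evol_mirror : J i2 i2 = J i0 i0 -> J i2 i1 = J i0 i1 ->
  forall t a b, evol J t (rev_ord a) (rev_ord b) = evol J t a b.
Proof.
move=> J22 J21; apply: (evol_reindex rev_ord_inj) => a b.
case: (ord3P a) => ->; case: (ord3P b) => ->; rewrite ?rev_ord3_0 ?rev_ord3_1 ?rev_ord3_2;
  by rewrite ?(J_sym i1 i0) ?(J_sym i1 i2) ?J22 ?J21 // J_sym.
Qed.

Lemma mirror_exclusion_PST t : J i2 i2 = J i0 i0 -> J i2 i1 = J i0 i1 ->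
  0 < t -> evol J t i0 i0 = 0 -> PST_at J t.
Proof.
move=> J22 J21 t_gt0 U00; apply/(PST_atE J_sym); split=> //.
have U_mirror := evol_mirror J22 J21 t.
set U := evol J t in U00 U_mirror *.
have U_unitary : U \is unitarymx := evol_unitary J_sym t.
have U22 : U i2 i2 = 0 by rewrite -U00 -(U_mirror i0 i0) rev_ord3_0.
have U21 : U i2 i1 = U i0 i1 by rewrite -(U_mirror i0 i1) rev_ord3_0 rev_ord3_1.
have U01 : U i0 i1 = 0.
  have := unitarymx_dot U_unitary i0 i2; rewrite sum3 U00 U22 U21 mul0r conjC0 mulr0 add0r addr0.
  by move/eqP; rewrite mul_conjC_eq0 => /eqP.
have := unitarymx_row_norm U_unitary i0; rewrite sum3 U00 U01 normr0 expr0n !add0r evol_sym //.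
by move/eqP; rewrite sqrp_eq1 // => /eqP.
Qed.

End Jacobi3.

Theorem mainTheorem1 (R : realType) (J : 'M[R]_3) :
  is_jacobi J -> realizes_PST J -> forall t : R, ~ ESE_at J t.
Proof.
(* [ESE_at J t] supplies its own earliest PST time. *)
move=> J_jacobi _ t [T0 [[PST_T0 T0_min] [/andP[t_gt0 t_lt_T0] U00]]].
have [J22 J21] := PST_mirror_symmetric J_jacobi PST_T0.
rewrite cinner_e0 in U00.
by apply: (T0_min t); [rewrite t_gt0 | exact: mirror_exclusion_PST].
Qed.
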